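(* Let $k$ be a positive integer, $a\ge k+2$ an integer and $G=K_a\,\square\,K_a$. Then $\gamma_{P,k}(G-e)=a-k-1$ for every edge $e$ of $G$.
   Context: $K_a$ is the complete graph on $a$ vertices, $\square$ denotes the Cartesian product of graphs, and $G-e$ is obtained by deleting the edge $e$. $N_G[v]$ is the closed neighbourhood of $v$, and $N_G[S]$ the union of closed neighbourhoods of vertices of $S$. For $S\subseteq V(G)$, define $\mathcal{P}^{0}_{G,k}(S)=N_G[S]$ and $\mathcal{P}^{i+1}_{G,k}(S)=\bigcup\{N_G[v] : v\in \mathcal{P}^{i}_{G,k}(S),\ |N_G[v]\setminus \mathcal{P}^{i}_{G,k}(S)|\le k\}$; these increase and stabilize to $\mathcal{P}^{\infty}_{G,k}(S)$. $S$ is a $k$-power dominating set if $\mathcal{P}^{\infty}_{G,k}(S)=V(G)$; $\gamma_{P,k}(G)$ is the minimum size of such a set. *)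

(* Simple graphs as symmetric irreflexive relations on a finType. *)
From mathcomp Require Import all_boot.
Set Implicit Arguments. Unset Strict Implicit. Unset Printing Implicit Defensive.

Section Graphs.
Variable T : finType.

Definition cnbhd (g : rel T) (v : T) : {set T} := [set w | (w == v) || g v w].

Definition cnbhd_set (g : rel T) (S : {set T}) : {set T} :=
  \bigcup_(v in S) cnbhd g v.

Definition pstep (g : rel T) (k : nat) (P : {set T}) : {set T} :=
  \bigcup_(v in P | #|cnbhd g v :\: P| <= k) cnbhd g v.

Definition pobs (g : rel T) (k : nat) (S : {set T}) (i : nat) : {set T} :=
  iter i (pstep g k) (cnbhd_set g S).

(* S is k-power dominating: P^infty = V, i.e. some (increasing) stage is V *)
Definition k_power_dominating (g : rel T) (k : nat) (S : {set T}) : Prop :=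
  exists i, pobs g k S i = [set: T].

Definition is_k_power_domination_number (g : rel T) (k n : nat) : Prop :=
  (exists S : {set T}, k_power_dominating g k S /\ #|S| = n) /\
  (forall S : {set T}, k_power_dominating g k S -> n <= #|S|).

Definition del_edge (g : rel T) (u v : T) : rel T :=
  [rel x y | g x y && ~~ (((x == u) && (y == v)) || ((x == v) && (y == u)))].

End Graphs.

Definition complete_graph (a : nat) : rel 'I_a := [rel x y | x != y].
Arguments complete_graph a : clear implicits.

Definition cart_prod (T1 T2 : finType) (g1 : rel T1) (g2 : rel T2) : rel (T1 * T2)%type :=
  [rel x y | ((x.1 == y.1) && g2 x.2 y.2) || ((x.2 == y.2) && g1 x.1 y.1)].

Definition rook_graph (a : nat) : rel ('I_a * 'I_a)%type :=
  cart_prod (complete_graph a) (complete_graph a).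
Arguments rook_graph a : clear implicits.

From mathcomp Require Import all_boot all_fingroup zify.
Set Implicit Arguments. Unset Strict Implicit. Unset Printing Implicit Defensive.

(* Let R and C be the rows and columns met by S. If S misses at least k + 2
   rows and k + 2 columns, the observed set never leaves the union of the lines
   in R and C: a vertex of that union lying on a missed row has at least k + 2
   neighbours outside it on that row, and the deleted edge hides at most one of
   them. Hence a - k - 1 <= |S|.
   Conversely, place a - k - 1 vertices on distinct rows and columns so that the
   edge joins u, in a row of S, to v, in a missed row, both in a missed column.
   Then u has only k unobserved neighbours and forces its column except v; each
   missed row other than v's then has k unobserved vertices and is forced from
   a column of S; finally each remaining vertex of v's row is the only
   unobserved neighbour of a vertex of its column. An edge lying in a row is
   handled by transposition. *)

Lemma exists_subset_card (T : finType) (A : {set T}) m :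
  m <= #|A| -> exists2 L : {set T}, L \subset A & #|L| = m.
Proof.
move=> le_m_A; exists [set x in take m (enum A)].
  by apply/subsetP => x; rewrite inE => /mem_take; rewrite mem_enum.
by rewrite cardsE (card_uniqP _) ?take_uniq ?enum_uniq // size_takel -?cardE.
Qed.

Lemma exists_card_mem_notin (T : finType) (x y : T) m :
  x != y -> 0 < m < #|T| -> exists L : {set T}, [/\ #|L| = m, x \in L & y \notin L].
Proof.
move=> xy /andP[m_gt0 m_lt].
have card_xy : #|[set~ x] :\ y| = #|T|.-2.
  by have := cardsD1 y [set~ x]; rewrite cardsC1 !inE eq_sym xy; lia.
have [|L0 sub_L0 card_L0] := @exists_subset_card _ ([set~ x] :\ y) m.-1; first lia.
have [xL0 yL0] : x \notin L0 /\ y \notin L0.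
  by split; apply/negP => /(subsetP sub_L0); rewrite !inE ?eqxx ?andbF.
exists (x |: L0); split; rewrite ?setU11 //; first by rewrite cardsU1 xL0; lia.
by rewrite !inE negb_or eq_sym xy.
Qed.

Lemma card_imsetD1 (T1 T2 : finType) (f : T1 -> T2) (A : {set T1}) b :
  injective f -> b \in A -> #|f @: A :\ f b| = #|A|.-1.
Proof.
by move=> f_inj bA; have := cardsD1 (f b) (f @: A); rewrite imset_f // card_imset //; lia.
Qed.

Section PowerDomination.
Variables (T : finType) (g : rel T) (k : nat).

Lemma pstepS (P Q : {set T}) : P \subset Q -> pstep g k P \subset pstep g k Q.
Proof.
move=> PQ; apply/subsetP => w /bigcupP[v /andP[vP small] wv].
apply/bigcupP; exists v => //; rewrite (subsetP PQ) //=.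
by apply: leq_trans small; apply/subset_leq_card/setDS.
Qed.

Lemma pobs_subset_succ S i : pobs g k S i \subset pobs g k S i.+1.
Proof.
elim: i => [|i IH]; last exact: pstepS.
rewrite /pobs /=; apply/subsetP => w /bigcupP[s sS ws]; apply/bigcupP; exists s => //.
have -> : cnbhd g s :\: cnbhd_set g S = set0.
  by apply/eqP; rewrite setD_eq0; apply/subsetP => z zs; apply/bigcupP; exists s.
by rewrite cards0 andbT; apply/bigcupP; exists s; rewrite // inE eqxx.
Qed.

Lemma cnbhd_subset_pobs_succ S (P : {set T}) i v :
  P \subset pobs g k S i -> v \in P -> #|cnbhd g v :\: P| <= k ->
  cnbhd g v \subset pobs g k S i.+1.
Proof.
move=> sub_P vP small; apply/subsetP => w wv; apply/bigcupP; exists v => //.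
rewrite (subsetP sub_P) //=; apply: leq_trans small.
by apply/subset_leq_card/setDS.
Qed.

Lemma pobs_subset_closed S (U : {set T}) :
  cnbhd_set g S \subset U ->
  {in U, forall w, #|cnbhd g w :\: U| <= k -> cnbhd g w \subset U} ->
  forall i, pobs g k S i \subset U.
Proof.
move=> sub_U closed_U; elim=> // i IH.
apply/subsetP => z /bigcupP[w /andP[wP small] zw].
have wU := subsetP IH w wP.
apply: (subsetP (closed_U w wU _)) zw; apply: leq_trans small.
by apply/subset_leq_card/setDS.
Qed.

End PowerDomination.

Section Isomorphism.
Variables (T T' : finType) (f : T -> T') (f' : T' -> T).
Hypotheses (fK : cancel f f') (f'K : cancel f' f).
Variables (g : rel T) (h : rel T') (k : nat).
Hypothesis h_f : forall x y, h (f x) (f y) = g x y.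

Let mem_imset_can (A : {set T}) w : (w \in f @: A) = (f' w \in A).
Proof. by rewrite (can2_imset_pre _ fK f'K) inE. Qed.

Lemma imset_cnbhd v : f @: cnbhd g v = cnbhd h (f v).
Proof. by apply/setP => w; rewrite mem_imset_can !inE -h_f f'K (can2_eq f'K fK). Qed.

Lemma imset_bigcup_cnbhd (P : pred T) :
  f @: (\bigcup_(v | P v) cnbhd g v) = \bigcup_(w | P (f' w)) cnbhd h w.
Proof.
apply/setP => w; rewrite mem_imset_can.
apply/bigcupP/bigcupP => [[v Pv wv] | [w' Pw' ww']].
  by exists (f v); rewrite ?fK // -imset_cnbhd mem_imset_can.
by exists (f' w'); rewrite // -mem_imset_can imset_cnbhd f'K.
Qed.

Lemma imset_pobs S i : f @: pobs g k S i = pobs h k (f @: S) i.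
Proof.
elim: i => [|i IH].
  by rewrite /pobs /= imset_bigcup_cnbhd; apply: eq_bigl => w; rewrite mem_imset_can.
rewrite /pobs !iterS -!/(pobs _ _ _ i) -IH imset_bigcup_cnbhd; apply: eq_bigl => w.
rewrite mem_imset_can -[in cnbhd h w](f'K w) -imset_cnbhd.
have -> : f @: cnbhd g (f' w) :\: f @: pobs g k S i = f @: (cnbhd g (f' w) :\: pobs g k S i).
  by apply/setP => z; rewrite !(inE, mem_imset_can).
by rewrite card_imset //; exact: can_inj fK.
Qed.

Lemma k_power_dominating_imset S : k_power_dominating g k S -> k_power_dominating h k (f @: S).
Proof.
move=> [i cover]; exists i; rewrite -imset_pobs cover.
by apply/setP => w; rewrite mem_imset_can !inE.
Qed.

Lemma del_edge_imset u v x y : del_edge h (f u) (f v) (f x) (f y) = del_edge g u v x y.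
Proof. by rewrite /del_edge /= h_f !(inj_eq (can_inj fK)). Qed.

End Isomorphism.

Section DeleteEdge.
Variables (T : finType) (g : rel T) (u v : T).
Local Notation ge := (del_edge g u v).

Lemma cnbhd_del_edge_sub w : cnbhd ge w \subset cnbhd g w.
Proof. by apply/subsetP => z; rewrite !inE => /orP[->|/andP[->]]; rewrite ?orbT. Qed.

Lemma cnbhd_del_edge w : w != u -> w != v -> cnbhd ge w = cnbhd g w.
Proof.
by move=> /negbTE wu /negbTE wv; apply/setP => z; rewrite !inE /del_edge /= wu wv andbT.
Qed.

Lemma cnbhd_del_edgeL : u != v -> cnbhd ge u = cnbhd g u :\ v.
Proof.
move=> uv; apply/setP => z; rewrite !inE /del_edge /= eqxx (negbTE uv) /= orbF.
by case: (eqVneq z u) => [->|_]; rewrite ?uv //= andbC.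
Qed.

Lemma cnbhd_del_edge_card w (X : {set T}) :
  #|cnbhd g w :\: X| <= (#|cnbhd ge w :\: X|).+1.
Proof.
pose partner := if w == u then v else u.
apply: (@leq_trans #|(cnbhd ge w :\: X) :|: [set partner]|).
  apply/subset_leq_card/subsetP => z; rewrite !inE /del_edge /=.
  move=> /andP[-> /orP[->|->]] //=.
  have [->|z_partner] := eqVneq z partner; first by rewrite orbT.
  rewrite orbF; apply/orP; right; apply: contra z_partner.
  rewrite /partner; case/orP => /andP[/eqP-> /eqP->]; rewrite ?eqxx //.
  by case: ifP => [/eqP->|_]; rewrite eqxx.
by rewrite cardsU cards1 addn1 leq_subr.
Qed.

Lemma cnbhd_set_del_edge (S : {set T}) :
  u \notin S -> v \notin S -> cnbhd_set ge S = cnbhd_set g S.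
Proof.
move=> uS vS; apply: eq_bigr => w wS.
by rewrite cnbhd_del_edge //; [apply: contraNneq uS | apply: contraNneq vS] => <-.
Qed.

End DeleteEdge.

Section Rook.
Variable a : nat.
Local Notation V := ('I_a * 'I_a)%type.
Local Notation G := (rook_graph a).

Lemma rook_graphE x y : G x y = (x != y) && ((x.1 == y.1) || (x.2 == y.2)).
Proof.
case: x y => [x1 x2] [y1 y2]; rewrite /rook_graph /cart_prod /complete_graph /= xpair_eqE.
by case: (x1 =P y1); case: (x2 =P y2).
Qed.

Lemma cnbhd_rook w : cnbhd G w = [set z | (z.1 == w.1) || (z.2 == w.2)].
Proof.
apply/setP => z; rewrite !inE rook_graphE.
by case: (eqVneq z w) => [->|zw]; rewrite ?eqxx //= (eq_sym w.1) (eq_sym w.2).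
Qed.

Definition rows_of (S : {set V}) : {set 'I_a} := [set s.1 | s in S].
Definition cols_of (S : {set V}) : {set 'I_a} := [set s.2 | s in S].
Definition lines_of (S : {set V}) : {set V} :=
  [set w | (w.1 \in rows_of S) || (w.2 \in cols_of S)].

Lemma cnbhd_set_rook S : cnbhd_set G S = lines_of S.
Proof.
apply/setP => z; rewrite inE.
apply/bigcupP/orP => [[s sS]|[/imsetP[s sS zs]|/imsetP[s sS zs]]].
- by rewrite cnbhd_rook inE => /orP[]/eqP->; [left|right]; exact: imset_f.
- by exists s; rewrite // cnbhd_rook inE zs eqxx.
- by exists s; rewrite // cnbhd_rook inE zs eqxx orbT.
Qed.

Lemma cols_le_cnbhd_rookD S w :
  w.1 \notin rows_of S -> #|~: cols_of S| <= #|cnbhd G w :\: lines_of S|.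
Proof.
move=> w1; have inj : injective (@pair _ 'I_a w.1) by move=> c d [].
rewrite -(card_imset _ inj); apply/subset_leq_card/subsetP => _ /imsetP[c cC ->].
by rewrite inE in cC; rewrite cnbhd_rook !inE /= (negbTE w1) (negbTE cC) eqxx.
Qed.

Lemma rows_le_cnbhd_rookD S w :
  w.2 \notin cols_of S -> #|~: rows_of S| <= #|cnbhd G w :\: lines_of S|.
Proof.
move=> w2; have inj : injective (@pair 'I_a _ ^~ w.2) by move=> c d [].
rewrite -(card_imset _ inj); apply/subset_leq_card/subsetP => _ /imsetP[r rR ->].
by rewrite inE in rR; rewrite cnbhd_rook !inE /= (negbTE w2) (negbTE rR) eqxx orbT.
Qed.

Section LowerBound.
Variables (u v : V) (k : nat).
Local Notation Ge := (del_edge G u v).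

Lemma lines_of_closed S :
  k.+2 <= #|~: rows_of S| -> k.+2 <= #|~: cols_of S| ->
  {in lines_of S, forall w,
    #|cnbhd Ge w :\: lines_of S| <= k -> cnbhd Ge w \subset lines_of S}.
Proof.
move=> free_rows free_cols w; rewrite inE => w_lines small.
have := cnbhd_del_edge_card G u v w (lines_of S).
have [w1|w1] := boolP (w.1 \in rows_of S); have [w2|w2] := boolP (w.2 \in cols_of S).
- move=> _; apply: subset_trans (cnbhd_del_edge_sub _ _ _ _) _; rewrite cnbhd_rook.
  by apply/subsetP => z; rewrite !inE => /orP[]/eqP->; rewrite ?w1 ?w2 ?orbT.
- by have := rows_le_cnbhd_rookD w2; lia.
- by have := cols_le_cnbhd_rookD w1; lia.
- by rewrite (negbTE w1) (negbTE w2) in w_lines.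
Qed.

Lemma rook_del_edge_kpd_card S : k_power_dominating Ge k S -> a - k - 1 <= #|S|.
Proof.
move=> [i cover]; rewrite leqNgt; apply/negP => small.
have free (A : {set 'I_a}) : #|A| <= #|S| -> k.+2 <= #|~: A|.
  by have := cardsC A; rewrite card_ord; lia.
have free_rows := free (rows_of S) (leq_imset_card _ S).
have free_cols := free (cols_of S) (leq_imset_card _ S).
have sub_lines : cnbhd_set Ge S \subset lines_of S.
  rewrite -cnbhd_set_rook; apply/subsetP => z /bigcupP[s sS zs].
  by apply/bigcupP; exists s; rewrite ?(subsetP (cnbhd_del_edge_sub _ _ _ _) _ zs).
have := pobs_subset_closed sub_lines (lines_of_closed free_rows free_cols) i.
have [r] : exists r, r \in ~: rows_of S by apply/set0Pn; rewrite -card_gt0; lia.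
have [c] : exists c, c \in ~: cols_of S by apply/set0Pn; rewrite -card_gt0; lia.
rewrite cover !inE => c_free r_free /subsetP /(_ (r, c) (in_setT _)).
by rewrite inE /= (negbTE r_free) (negbTE c_free).
Qed.

End LowerBound.

Definition swap_pair (z : V) : V := (z.2, z.1).

Lemma swap_pairK : involutive swap_pair. Proof. by case. Qed.

Lemma rook_graph_swap_pair x y : G (swap_pair x) (swap_pair y) = G x y.
Proof. by rewrite !rook_graphE (inj_eq (inv_inj swap_pairK)) orbC. Qed.

Section UpperBound.
Variables (k : nat) (x y c : 'I_a) (S : {set V}).
Hypotheses (x_rows : x \in rows_of S) (y_rows : y \notin rows_of S).
Hypothesis c_cols : c \notin cols_of S.
Hypotheses (rows_free_gt1 : 1 < #|~: rows_of S|) (rows_free : #|~: rows_of S| <= k.+1).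
Hypothesis cols_free : #|~: cols_of S| <= k.+1.
Local Notation u := (x, c).
Local Notation v := (y, c).
Local Notation Ge := (del_edge G u v).

Let xy : x != y. Proof. by apply: contraNneq y_rows => <-. Qed.

Lemma pobs0_lines : pobs Ge k S 0 = lines_of S.
Proof.
rewrite /pobs /= cnbhd_set_del_edge ?cnbhd_set_rook //.
  by apply: contra c_cols => uS; exact: (imset_f (fun s : V => s.2) uS).
by apply: contra y_rows => vS; exact: (imset_f (fun s : V => s.1) vS).
Qed.

Lemma lines_col_sub_pobs1 : lines_of S :|: ([set z | z.2 == c] :\ v) \subset pobs Ge k S 1.
Proof.
have lines_pobs0 : lines_of S \subset pobs Ge k S 0 by rewrite pobs0_lines.
rewrite subUset (subset_trans lines_pobs0 (pobs_subset_succ _ _ _ _)) /=.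
have u_lines : u \in lines_of S by rewrite inE x_rows.
have Ne_u : cnbhd Ge u = cnbhd G u :\ v.
  by rewrite cnbhd_del_edgeL // xpair_eqE negb_and xy.
apply: subset_trans (cnbhd_subset_pobs_succ lines_pobs0 u_lines _).
  by rewrite Ne_u cnbhd_rook; apply/subsetP => z; rewrite !inE => /andP[-> ->]; rewrite orbT.
apply: (@leq_trans #|((pair^~ c) @: ~: rows_of S) :\ v|).
  rewrite Ne_u cnbhd_rook; apply/subset_leq_card/subsetP => z.
  rewrite !inE negb_or => /andP[/andP[z1 z2] /andP[zv /orP[/eqP z1x|/eqP z2c]]].
    by rewrite z1x x_rows in z1.
  rewrite zv; apply/imsetP; exists z.1; first by rewrite inE.
  by move: z2c; case: z {z1 z2 zv} => /= ? ? ->.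
rewrite card_imsetD1 ?inE //; [lia | by move=> ? ? []].
Qed.

Lemma rows_sub_pobs2 : [set z | z.1 != y] :|: lines_of S \subset pobs Ge k S 2.
Proof.
have lines_pobs2 : lines_of S \subset pobs Ge k S 2.
  apply: subset_trans (pobs_subset_succ _ _ _ 1).
  by apply: subset_trans lines_col_sub_pobs1; exact: subsetUl.
rewrite subUset lines_pobs2 andbT; apply/subsetP => z; rewrite inE => zy.
have [s sS _] := imsetP x_rows.
pose w := (z.1, s.2).
have w_P1 : w \in lines_of S :|: ([set z | z.2 == c] :\ v).
  by rewrite !inE (imset_f (fun s : V => s.2) sS) orbT.
have Ne_w : cnbhd Ge w = cnbhd G w.
  apply: cnbhd_del_edge; rewrite xpair_eqE negb_and ?zy ?orbT //.
  by apply/orP; right; apply: contraNneq c_cols => <-; exact: imset_f.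
apply: (subsetP (cnbhd_subset_pobs_succ lines_col_sub_pobs1 w_P1 _));
  last by rewrite Ne_w cnbhd_rook inE eqxx.
apply: (@leq_trans #|(pair z.1 @: ~: cols_of S) :\ (z.1, c)|).
  rewrite Ne_w cnbhd_rook; apply/subset_leq_card/subsetP => -[r d].
  rewrite !inE /= negb_or => /andP[/andP[/norP[_ d_cols] col] /orP[/eqP rz|/eqP ds]];
    last by rewrite ds (imset_f (fun s : V => s.2) sS) in d_cols.
  rewrite rz /= xpair_eqE (negbTE zy) /= in col *.
  by rewrite xpair_eqE eqxx /= col /=; apply/imsetP; exists d; rewrite ?inE.
rewrite card_imsetD1 ?inE //; [lia | by move=> ? ? []].
Qed.

Lemma rook_del_edge_col_kpd : k_power_dominating Ge k S.
Proof.
exists 3; apply/eqP; rewrite eqEsubset subsetT /=; apply/subsetP => z _.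
have [r] : exists r, r \in ~: rows_of S :\ y.
  apply/set0Pn; rewrite -card_gt0 -ltnS.
  by have := cardsD1 y (~: rows_of S); rewrite inE y_rows add1n => <-.
rewrite !inE => /andP[ry r_rows].
pose w := (r, z.2).
have w_P2 : w \in [set z | z.1 != y] :|: lines_of S by rewrite !inE ry.
have Ne_w : cnbhd Ge w = cnbhd G w.
  rewrite cnbhd_del_edge // xpair_eqE negb_and ?ry //.
  by apply/orP; left; apply: contraNneq r_rows => ->.
apply: (subsetP (cnbhd_subset_pobs_succ rows_sub_pobs2 w_P2 _));
  last by rewrite Ne_w cnbhd_rook inE eqxx orbT.
apply: (@leq_trans #|[set (y, z.2)]|); last by rewrite cards1; lia.
rewrite Ne_w cnbhd_rook; apply/subset_leq_card/subsetP => -[r' d].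
rewrite !inE negb_or negbK /= => /andP[/andP[/eqP-> _] /orP[/eqP yr|/eqP->]].
  by rewrite yr eqxx in ry.
by rewrite eqxx.
Qed.

End UpperBound.

Lemma rook_del_edge_col_witness k (x y c : 'I_a) :
  0 < k -> k.+2 <= a -> x != y ->
  exists S, k_power_dominating (del_edge G (x, c) (y, c)) k S /\ #|S| = a - k - 1.
Proof.
move=> k_gt0 k_a xy.
have [|L [card_L xL yL]] := @exists_card_mem_notin _ x y (a - k - 1) xy.
  by rewrite card_ord; lia.
(* [tperm y c] sends the missed row y to c, so column c is missed as well. *)
pose S := [set (i, tperm y c i) | i in L].
have rows_S : rows_of S = L by rewrite /rows_of -imset_comp imset_id.
have cols_S : cols_of S = tperm y c @: L by rewrite /cols_of -imset_comp.
have card_free (A : {set 'I_a}) : #|A| = a - k - 1 -> #|~: A| = k.+1.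
  by have := cardsC A; rewrite card_ord; lia.
exists S; split; last by rewrite card_imset // => i j [].
apply: rook_del_edge_col_kpd; rewrite ?rows_S ?cols_S ?card_free ?card_imset //;
  try exact: perm_inj.
by rewrite -{1}(tpermL y c) mem_imset //; exact: perm_inj.
Qed.

Lemma rook_del_edge_row_witness k (r x y : 'I_a) :
  0 < k -> k.+2 <= a -> x != y ->
  exists S, k_power_dominating (del_edge G (r, x) (r, y)) k S /\ #|S| = a - k - 1.
Proof.
move=> k_gt0 k_a xy; have [S [kpd_S card_S]] := rook_del_edge_col_witness r k_gt0 k_a xy.
exists (swap_pair @: S); split; last by rewrite card_imset //; exact: inv_inj swap_pairK.
apply: (k_power_dominating_imset swap_pairK swap_pairK _ kpd_S).
exact: (del_edge_imset swap_pairK rook_graph_swap_pair (x, r) (y, r)).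
Qed.

End Rook.

Theorem mainTheorem7 (k a : nat) (hk : 0 < k) (ha : k + 2 <= a)
    (u v : ('I_a * 'I_a)%type) (huv : rook_graph a u v) :
  is_k_power_domination_number (del_edge (rook_graph a) u v) k (a - k - 1).
Proof.
split; last by move=> S; exact: rook_del_edge_kpd_card.
have k_a : k.+2 <= a by rewrite -addn2.
move: huv; rewrite rook_graphE; case: u v => [x1 x2] [y1 y2] /=.
rewrite xpair_eqE negb_and => /andP[neq /orP[/eqP same_row | /eqP same_col]].
- by subst y1; rewrite eqxx in neq; exact: rook_del_edge_row_witness.
- by subst y2; rewrite eqxx orbF in neq; exact: rook_del_edge_col_witness.
Qed.
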